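(* Let $f,g$ be smooth functions on an interval $I\subset\mathbb{R}$ with $\dot f^2+\dot g^2=1$ and $f$ nowhere zero, let $l=l(v)$, $v\in J$, be an arc-length parametrized curve $c$ on the unit sphere $S^2(1)\subset\mathbb{R}^3=\mathrm{span}\{e_1,e_2,e_3\}$ with spherical curvature $\kappa(v)$, and let $M^2: z(u,v)=f(u)\,l(v)+g(u)\,e_4$ (a meridian surface). Assume $M^2$ belongs to the general class, i.e. $\kappa_m(u)\kappa(v)\neq0$, where $\kappa_m=\dot f\ddot g-\dot g\ddot f$. Let $a\neq0$ be a constant. Then $M^2$ has constant mean curvature $\|H\|=a$ if and only if the curve $c$ is a circle on $S^2(1)$ with constant spherical curvature $\kappa\equiv b$ for some constant $b\neq0$, and $f$ satisfies the differential equation $$\bigl(1-\dot f^2-f\ddot f\bigr)^2=(1-\dot f^2)\,(4a^2f^2-b^2).$$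
   Context: $\{e_1,e_2,e_3,e_4\}$ is the standard orthonormal basis of $\mathbb{R}^4$. For the arc-length curve $l(v)$ on $S^2(1)$ set $t=l'$ and let $n$ be the unit vector with $\{t,n,l\}$ orthonormal; the spherical curvature $\kappa$ is defined by $l'=t$, $t'=\kappa n-l$, $n'=-\kappa t$. $\kappa_m$ is the curvature of the meridian $u\mapsto(f(u),g(u))$. $H$ is the mean curvature vector field of $M^2$ in $\mathbb{R}^4$ (half the trace of the second fundamental form) and $\|H\|$ its length. *)

From Stdlib Require Import Reals.
From Coquelicot Require Import Coquelicot.
Open Scope R_scope.

(* Vectors of R^3 / R^4 are represented as functions nat -> R;
   only the indices 0,1,2 (resp. 0,1,2,3) are meaningful.
   Index i corresponds to the basis vector e_(i+1). *)
Definition dot3 (x y : nat -> R) : R := x 0%nat * y 0%nat + x 1%nat * y 1%nat + x 2%nat * y 2%nat.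
Definition dot4 (x y : nat -> R) : R := dot3 x y + x 3%nat * y 3%nat.

Definition cross3 (x y : nat -> R) : nat -> R := fun i =>
  match i with
  | 0%nat => x 1%nat * y 2%nat - x 2%nat * y 1%nat
  | 1%nat => x 2%nat * y 0%nat - x 0%nat * y 2%nat
  | 2%nat => x 0%nat * y 1%nat - x 1%nat * y 0%nat
  | _ => 0
  end.

Definition Ioo (a b : Rbar) (x : R) : Prop := Rbar_lt a x /\ Rbar_lt x b.

Definition smooth_on (D : R -> Prop) (h : R -> R) : Prop :=
  forall (n : nat) (x : R), D x -> ex_derive (Derive_n h n) x.

Definition dvec (w : R -> nat -> R) (t : R) : nat -> R :=
  fun i => Derive (fun s => w s i) t.

(* Frenet-type frame of a curve l on S^2(1): t = l', n = l x t, so that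
   {t, n, l} is an (positively oriented) orthonormal frame *)
Definition tan_sph (l : R -> nat -> R) : R -> nat -> R := dvec l.
Definition nor_sph (l : R -> nat -> R) : R -> nat -> R :=
  fun v => cross3 (l v) (tan_sph l v).

Definition kappa_m (f g : R -> R) (u : R) : R :=
  Derive f u * Derive (Derive g) u - Derive g u * Derive (Derive f) u.

Definition meridian (f g : R -> R) (l : R -> nat -> R) : R -> R -> nat -> R :=
  fun u v i => match i with
               | 0%nat | 1%nat | 2%nat => f u * l v i
               | 3%nat => g u
               | _ => 0
               end.

Section Surface.
Variable z : R -> R -> nat -> R.

Definition z_u (u v : R) : nat -> R := fun i => Derive (fun s => z s v i) u.
Definition z_v (u v : R) : nat -> R := fun i => Derive (fun s => z u s i) v.
Definition z_uu (u v : R) : nat -> R := fun i => Derive (fun s => z_u s v i) u.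
Definition z_uv (u v : R) : nat -> R := fun i => Derive (fun s => z_u u s i) v.
Definition z_vv (u v : R) : nat -> R := fun i => Derive (fun s => z_v u s i) v.

Definition fE (u v : R) : R := dot4 (z_u u v) (z_u u v).
Definition fF (u v : R) : R := dot4 (z_u u v) (z_v u v).
Definition fG (u v : R) : R := dot4 (z_v u v) (z_v u v).

(* normal component of w at the point (u,v): w minus its orthogonal
   projection onto span{z_u, z_v} *)
Definition normal_part (u v : R) (w : nat -> R) : nat -> R :=
  let E := fE u v in let F := fF u v in let G := fG u v in
  let D := E * G - F * F in
  let al := (G * dot4 w (z_u u v) - F * dot4 w (z_v u v)) / D in
  let be := (E * dot4 w (z_v u v) - F * dot4 w (z_u u v)) / D in
  fun i => w i - al * z_u u v i - be * z_v u v i.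

Definition sig_uu (u v : R) := normal_part u v (z_uu u v).
Definition sig_uv (u v : R) := normal_part u v (z_uv u v).
Definition sig_vv (u v : R) := normal_part u v (z_vv u v).

(* mean curvature vector H = (1/2) tr sigma (trace w.r.t. the induced metric) *)
Definition mean_curv (u v : R) : nat -> R := fun i =>
  (fG u v * sig_uu u v i - 2 * fF u v * sig_uv u v i + fE u v * sig_vv u v i)
  / (2 * (fE u v * fG u v - fF u v * fF u v)).

Definition norm_H (u v : R) : R := sqrt (dot4 (mean_curv u v) (mean_curv u v)).
End Surface.

(* Along the meridian surface the coordinate frame z_u = f' l + g' e4, z_v = f t is
   orthogonal with E = 1 and G = f^2, and the mean curvature vector is
     H = kappa/(2f) n + (f kappa_m + g')/(2f) (- g' l + f' e4),
   so that 4 f^2 |H|^2 = kappa^2 + (f kappa_m + g')^2.  Since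
   g' (f kappa_m + g') = 1 - f'^2 - f f'', the condition |H| = a makes kappa^2 constant,
   hence kappa constant (it is continuous and never zero), and yields the equation for f.
   Conversely, the equation gives (f kappa_m + g')^2 = 4 a^2 f^2 - b^2 wherever g' <> 0;
   at a zero of g' we have kappa_m = f' g'' <> 0, so the zeros of g' are isolated and the
   identity extends to them by continuity. *)

From Stdlib Require Import Reals Lra Lia.
From Coquelicot Require Import Coquelicot.
Open Scope R_scope.

Lemma dot3_comm (x y : nat -> R) : dot3 x y = dot3 y x.
Proof. unfold dot3; ring. Qed.

Lemma dot3_linear_l (x y z w : nat -> R) (a b : R) :
  (forall i, (i < 3)%nat -> x i = a * y i + b * z i) ->
  dot3 x w = a * dot3 y w + b * dot3 z w.
Proof. intro Hx; unfold dot3; rewrite !Hx by lia; ring. Qed.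

Lemma dot3_cross3_l (x y : nat -> R) : dot3 x (cross3 x y) = 0.
Proof. unfold dot3, cross3; ring. Qed.

Lemma dot3_cross3_r (x y : nat -> R) : dot3 y (cross3 x y) = 0.
Proof. unfold dot3, cross3; ring. Qed.

Lemma dot3_cross3_cross3 (x y : nat -> R) :
  dot3 (cross3 x y) (cross3 x y) = dot3 x x * dot3 y y - dot3 x y ^ 2.
Proof. unfold dot3, cross3; ring. Qed.

Lemma dot4_orthonormal_combination (p q w : nat -> R) (al be ga : R) :
  dot3 p p = 1 -> dot3 q q = 1 -> dot3 p q = 0 ->
  (forall i, (i < 3)%nat -> w i = al * p i + be * q i) -> w 3%nat = ga ->
  dot4 w w = al ^ 2 + be ^ 2 + ga ^ 2.
Proof.
intros Hp Hq Hpq Hw Hw3.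
unfold dot4; rewrite Hw3, (dot3_linear_l w p q w al be Hw).
rewrite !(dot3_comm _ w), !(dot3_linear_l w p q _ al be Hw), (dot3_comm q p), Hp, Hq, Hpq.
ring.
Qed.

Lemma Ioo_open (a b : Rbar) (x : R) : Ioo a b x -> locally x (Ioo a b).
Proof.
apply (@open_and R_UniformSpace (fun y : R => Rbar_lt a y) (fun y : R => Rbar_lt y b)).
- apply open_Rbar_gt.
- apply open_Rbar_lt.
Qed.

Lemma Ioo_inhabited (a b : Rbar) : Rbar_lt a b -> exists x, Ioo a b x.
Proof.
unfold Ioo; destruct a as [a| |], b as [b| |]; simpl; intro H; try contradiction.
- exists ((a + b) / 2); simpl; lra.
- exists (a + 1); simpl; lra.
- exists (b - 1); simpl; lra.
- exists 0; simpl; auto.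
Qed.

Lemma Ioo_convex (a b : Rbar) (x y z : R) :
  Ioo a b x -> Ioo a b y -> x <= z <= y -> Ioo a b z.
Proof. unfold Ioo; destruct a as [a| |], b as [b| |]; simpl; intros; lra. Qed.

Lemma continuity_pt_of_ex_derive (h : R -> R) (x : R) : ex_derive h x -> continuity_pt h x.
Proof. intro H; apply continuity_pt_filterlim, (ex_derive_continuous h x H). Qed.

Lemma is_derive_locally_constant (h : R -> R) (x c d : R) :
  locally x (fun y => h y = c) -> is_derive h x d -> d = 0.
Proof.
intros Hc Hd.
rewrite <- (is_derive_unique h x d Hd), (Derive_ext_loc h (fun _ => c) x Hc).
apply Derive_const.
Qed.

Lemma locally_neq0_of_continuity_pt (h : R -> R) (x : R) :
  continuity_pt h x -> h x <> 0 -> locally x (fun y => h y <> 0).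
Proof.
intros Hc Hx; apply continuity_pt_filterlim in Hc.
destruct (Rlt_or_le 0 (h x)) as [Hp|Hn].
- apply (filter_imp (fun y => Rbar_lt 0 (h y))); [simpl; intros; lra|].
  exact (Hc _ (open_Rbar_gt 0 (h x) Hp)).
- apply (filter_imp (fun y => Rbar_lt (h y) 0)); [simpl; intros; lra|].
  apply (Hc (fun y => Rbar_lt y 0)), (open_Rbar_lt 0 (h x)); simpl; lra.
Qed.

Lemma Derive_eq0_of_locally_neq0 (h phi : R -> R) (x : R) :
  continuity_pt h x -> locally x (fun y => phi y <> 0 -> h y = 0) ->
  h x <> 0 -> Derive phi x = 0.
Proof.
intros Hc Hphi Hx.
rewrite (Derive_ext_loc phi (fun _ => 0)); [apply Derive_const|].
apply (filter_imp (fun y => h y <> 0 /\ (phi y <> 0 -> h y = 0))).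
- intros y [Hy Hy']; destruct (Req_dec (phi y) 0) as [->|Hne]; [reflexivity|].
  exfalso; exact (Hy (Hy' Hne)).
- apply filter_and; [apply locally_neq0_of_continuity_pt|]; assumption.
Qed.

Lemma IVT_sign_change (h : R -> R) (x y : R) :
  x < y -> (forall z, x <= z <= y -> continuity_pt h z) -> h x * h y < 0 ->
  exists z, x <= z <= y /\ h z = 0.
Proof.
intros Hxy Hc Hs.
destruct (Rlt_or_le (h x) 0) as [Hx|Hx].
- destruct (Ranalysis5.IVT_interv h x y Hc Hxy Hx ltac:(nra)) as [z Hz]; exists z; exact Hz.
- assert (Hx' : 0 < h x) by (destruct Hx as [|Hx]; [assumption | rewrite <- Hx in Hs; lra]).
  destruct (Ranalysis5.IVT_interv (fun s => - h s) x y) as [z [Hz Hhz]];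
    [| exact Hxy | cbv beta; lra | cbv beta; nra |].
  + intros z Hz; apply continuity_pt_opp, Hc, Hz.
  + exists z; split; [exact Hz | lra].
Qed.

Lemma Ioo_constant_of_sq_constant (a b : Rbar) (h : R -> R) (c x0 : R) :
  (forall x, Ioo a b x -> continuity_pt h x) ->
  (forall x, Ioo a b x -> h x <> 0) ->
  (forall x, Ioo a b x -> h x ^ 2 = c) ->
  Ioo a b x0 -> forall x, Ioo a b x -> h x = h x0.
Proof.
intros Hc Hnz Hsq Hx0.
assert (Hsame : forall x y, Ioo a b x -> Ioo a b y -> x < y -> h x = h y).
{ intros x y Hx Hy Hxy.
  destruct (Req_dec (h x) (h y)) as [Heq|Hne]; [exact Heq | exfalso].
  assert (Hopp : h x = - h y).
  { assert (h x ^ 2 = h y ^ 2) by (rewrite !Hsq; auto). nra. }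
  assert (Hy2 : 0 < h y ^ 2) by (apply pow2_gt_0, Hnz, Hy).
  destruct (IVT_sign_change h x y Hxy) as [z [Hz Hhz]].
  - intros z Hz; apply Hc, (Ioo_convex a b x y); assumption.
  - rewrite Hopp; nra.
  - exact (Hnz z (Ioo_convex a b x y z Hx Hy Hz) Hhz). }
intros x Hx.
destruct (Rtotal_order x x0) as [Hlt|[->|Hgt]].
- exact (Hsame x x0 Hx Hx0 Hlt).
- reflexivity.
- symmetry; exact (Hsame x0 x Hx0 Hx Hgt).
Qed.

Lemma is_derive_dot3_self (w : R -> nat -> R) (v : R) :
  (forall i, (i < 3)%nat -> ex_derive (fun s => w s i) v) ->
  is_derive (fun s => dot3 (w s) (w s)) v (2 * dot3 (w v) (dvec w v)).
Proof.
intro Hw.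
set (w0 := fun s => w s 0%nat); set (w1 := fun s => w s 1%nat); set (w2 := fun s => w s 2%nat).
change (is_derive (fun s => w0 s * w0 s + w1 s * w1 s + w2 s * w2 s) v
  (2 * (w0 v * Derive w0 v + w1 v * Derive w1 v + w2 v * Derive w2 v))).
auto_derive.
- repeat split; apply Hw; lia.
- unfold w0, w1, w2; ring.
Qed.

Lemma continuity_pt_dot3_cross3 (p q r : R -> nat -> R) (x : R) :
  (forall i, (i < 3)%nat -> continuity_pt (fun s => p s i) x) ->
  (forall i, (i < 3)%nat -> continuity_pt (fun s => q s i) x) ->
  (forall i, (i < 3)%nat -> continuity_pt (fun s => r s i) x) ->
  continuity_pt (fun s => dot3 (p s) (cross3 (q s) (r s))) x.
Proof.
intros Hp Hq Hr; unfold dot3, cross3.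
repeat first [apply continuity_pt_plus | apply continuity_pt_opp | apply continuity_pt_mult];
  first [apply Hp | apply Hq | apply Hr]; lia.
Qed.

Section OrthogonalParametrization.
Variables (z : R -> R -> nat -> R) (u v : R).
Hypotheses (HF : fF z u v = 0) (HE : fE z u v <> 0) (HG : fG z u v <> 0).

Lemma normal_part_orthogonal (w : nat -> R) (i : nat) :
  normal_part z u v w i =
  w i - dot4 w (z_u z u v) / fE z u v * z_u z u v i
      - dot4 w (z_v z u v) / fG z u v * z_v z u v i.
Proof. unfold normal_part; rewrite HF; field; auto. Qed.

Lemma mean_curv_orthogonal (i : nat) :
  mean_curv z u v i = (sig_uu z u v i / fE z u v + sig_vv z u v i / fG z u v) / 2.
Proof. unfold mean_curv; rewrite HF; field; auto. Qed.

End OrthogonalParametrization.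

Lemma dot3_nor_sph_l (l : R -> nat -> R) (v : R) : dot3 (nor_sph l v) (l v) = 0.
Proof. unfold nor_sph; rewrite dot3_comm; apply dot3_cross3_l. Qed.

Lemma dot3_nor_sph_tan_sph (l : R -> nat -> R) (v : R) : dot3 (nor_sph l v) (tan_sph l v) = 0.
Proof. unfold nor_sph; rewrite dot3_comm; apply dot3_cross3_r. Qed.

Section SphericalFrame.
Variables (l : R -> nat -> R) (K v : R).
Hypotheses
  (Hl : dot3 (l v) (l v) = 1)
  (Ht : dot3 (tan_sph l v) (tan_sph l v) = 1)
  (Hlt : dot3 (l v) (tan_sph l v) = 0)
  (Hfrenet : forall i, (i < 3)%nat -> dvec (tan_sph l) v i = K * nor_sph l v i - l v i).

Lemma nor_sph_unit : dot3 (nor_sph l v) (nor_sph l v) = 1.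
Proof. unfold nor_sph; rewrite dot3_cross3_cross3, Hl, Ht, Hlt; ring. Qed.

Lemma dot3_dvec_tan_sph (w : nat -> R) :
  dot3 (dvec (tan_sph l) v) w = K * dot3 (nor_sph l v) w - dot3 (l v) w.
Proof.
rewrite (dot3_linear_l _ (nor_sph l v) (l v) w K (-1)); [ring|].
intros i Hi; rewrite Hfrenet by exact Hi; ring.
Qed.

Lemma spherical_curvature_eq :
  K = dot3 (fun i => dvec (tan_sph l) v i + l v i) (nor_sph l v).
Proof.
rewrite (dot3_linear_l _ (nor_sph l v) (l v) _ K 0), nor_sph_unit;
  [ring | intros i Hi; rewrite Hfrenet by exact Hi; ring].
Qed.

End SphericalFrame.

Lemma dot3_l_tan_sph_eq0 (ja jb : Rbar) (l : R -> nat -> R) :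
  (forall i, (i < 3)%nat -> smooth_on (Ioo ja jb) (fun v => l v i)) ->
  (forall v, Ioo ja jb v -> dot3 (l v) (l v) = 1) ->
  forall v, Ioo ja jb v -> dot3 (l v) (tan_sph l v) = 0.
Proof.
intros Hs Hl v Hv.
assert (Hd := is_derive_dot3_self l v (fun i Hi => Hs i Hi 0%nat v Hv)).
assert (H0 := is_derive_locally_constant _ v 1 _
  (filter_imp _ _ (fun y Hy => Hl y Hy) (Ioo_open _ _ _ Hv)) Hd).
unfold tan_sph; lra.
Qed.

Lemma spherical_curvature_continuous (ja jb : Rbar) (l : R -> nat -> R) (kappa : R -> R) :
  (forall i, (i < 3)%nat -> smooth_on (Ioo ja jb) (fun v => l v i)) ->
  (forall v, Ioo ja jb v -> dot3 (l v) (l v) = 1) ->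
  (forall v, Ioo ja jb v -> dot3 (tan_sph l v) (tan_sph l v) = 1) ->
  (forall v, Ioo ja jb v -> forall i, (i < 3)%nat ->
      dvec (tan_sph l) v i = kappa v * nor_sph l v i - l v i) ->
  forall v, Ioo ja jb v -> continuity_pt kappa v.
Proof.
intros Hs Hl Ht Hfrenet v Hv.
apply continuity_pt_filterlim; change (continuous kappa v).
apply (continuous_ext_loc kappa
  (fun s => dot3 (fun i => dvec (tan_sph l) s i + l s i) (nor_sph l s))).
- apply (filter_imp (Ioo ja jb)); [|exact (Ioo_open _ _ _ Hv)].
  intros s Hs'; symmetry; apply spherical_curvature_eq; auto.
  exact (dot3_l_tan_sph_eq0 ja jb l Hs Hl s Hs').
- apply continuity_pt_filterlim, continuity_pt_dot3_cross3; intros i Hi.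
  + apply continuity_pt_plus; apply continuity_pt_of_ex_derive;
      [exact (Hs i Hi 2%nat v Hv) | exact (Hs i Hi 0%nat v Hv)].
  + apply continuity_pt_of_ex_derive; exact (Hs i Hi 0%nat v Hv).
  + apply continuity_pt_of_ex_derive; exact (Hs i Hi 1%nat v Hv).
Qed.

Lemma unit_speed_acceleration_orthogonal (ia ib : Rbar) (f g : R -> R) :
  smooth_on (Ioo ia ib) f -> smooth_on (Ioo ia ib) g ->
  (forall u, Ioo ia ib u -> Derive f u ^ 2 + Derive g u ^ 2 = 1) ->
  forall u, Ioo ia ib u ->
  Derive f u * Derive (Derive f) u + Derive g u * Derive (Derive g) u = 0.
Proof.
intros Hf Hg Hunit u Hu.
assert (Hd : is_derive (fun s => Derive f s ^ 2 + Derive g s ^ 2) u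
  (2 * (Derive f u * Derive (Derive f) u + Derive g u * Derive (Derive g) u))).
{ auto_derive.
  - split; [exact (Hf 1%nat u Hu) | split; [exact (Hg 1%nat u Hu) | exact I]].
  - change (fun x => Derive f x) with (Derive f); change (fun x => Derive g x) with (Derive g).
    ring. }
assert (H0 := is_derive_locally_constant _ u 1 _
  (filter_imp _ _ (fun y Hy => Hunit y Hy) (Ioo_open _ _ _ Hu)) Hd).
lra.
Qed.

Section MeridianProfile.
Variables (f g : R -> R) (u c : R).
Hypotheses
  (Hunit : Derive f u ^ 2 + Derive g u ^ 2 = 1)
  (Hunit' : Derive f u * Derive (Derive f) u + Derive g u * Derive (Derive g) u = 0).

Lemma kappa_m_tangent_g :
  Derive g u * (f u * kappa_m f g u + Derive g u) =
  1 - Derive f u ^ 2 - f u * Derive (Derive f) u.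
Proof.
unfold kappa_m.
transitivity (f u * Derive f u
    * (Derive f u * Derive (Derive f) u + Derive g u * Derive (Derive g) u)
  + (1 - f u * Derive (Derive f) u) * (Derive f u ^ 2 + Derive g u ^ 2) - Derive f u ^ 2);
  [ring | rewrite Hunit, Hunit'; ring].
Qed.

Lemma kappa_m_tangent_f :
  Derive f u * (f u * kappa_m f g u + Derive g u) =
  f u * Derive (Derive g) u + Derive f u * Derive g u.
Proof.
unfold kappa_m.
transitivity (f u * Derive (Derive g) u * (Derive f u ^ 2 + Derive g u ^ 2)
  - f u * Derive g u * (Derive f u * Derive (Derive f) u + Derive g u * Derive (Derive g) u)
  + Derive f u * Derive g u);
  [ring | rewrite Hunit, Hunit'; ring].
Qed.

Lemma profile_ode_of_coef_sq :
  (f u * kappa_m f g u + Derive g u) ^ 2 = c ->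
  (1 - Derive f u ^ 2 - f u * Derive (Derive f) u) ^ 2 = (1 - Derive f u ^ 2) * c.
Proof.
intro Hc.
rewrite <- kappa_m_tangent_g, Rpow_mult_distr, Hc.
replace (Derive g u ^ 2) with (1 - Derive f u ^ 2) by lra; reflexivity.
Qed.

Lemma coef_sq_of_profile_ode :
  Derive g u <> 0 ->
  (1 - Derive f u ^ 2 - f u * Derive (Derive f) u) ^ 2 = (1 - Derive f u ^ 2) * c ->
  (f u * kappa_m f g u + Derive g u) ^ 2 = c.
Proof.
intros Hg Hode.
rewrite <- kappa_m_tangent_g, Rpow_mult_distr in Hode.
replace (1 - Derive f u ^ 2) with (Derive g u ^ 2) in Hode by lra.
apply Rmult_eq_reg_l in Hode; [exact Hode | apply pow_nonzero, Hg].
Qed.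

End MeridianProfile.

Section MeridianDerivatives.
Variables (f g : R -> R) (l : R -> nat -> R).
Let Z := meridian f g l.

Lemma meridian_z_u u v i : z_u Z u v i =
  match i with
  | O | S O | S (S O) => Derive f u * l v i | S (S (S O)) => Derive g u | _ => 0 end.
Proof.
unfold z_u, Z, meridian.
destruct i as [|[|[|[|i]]]]; try apply Derive_scal_l; try reflexivity; apply Derive_const.
Qed.

Lemma meridian_z_v u v i : z_v Z u v i =
  match i with O | S O | S (S O) => f u * tan_sph l v i | _ => 0 end.
Proof.
unfold z_v, Z, meridian.
destruct i as [|[|[|[|i]]]]; try apply Derive_scal; apply Derive_const.
Qed.

Lemma meridian_z_uu u v i : z_uu Z u v i =
  match i with
  | O | S O | S (S O) => Derive (Derive f) u * l v i
  | S (S (S O)) => Derive (Derive g) u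
  | _ => 0
  end.
Proof.
unfold z_uu; rewrite (Derive_ext _ _ _ (fun s => meridian_z_u s v i)).
destruct i as [|[|[|[|i]]]]; try apply Derive_scal_l; try reflexivity; apply Derive_const.
Qed.

Lemma meridian_z_vv u v i : z_vv Z u v i =
  match i with O | S O | S (S O) => f u * dvec (tan_sph l) v i | _ => 0 end.
Proof.
unfold z_vv; rewrite (Derive_ext _ _ _ (fun s => meridian_z_v u s i)).
destruct i as [|[|[|[|i]]]]; try apply Derive_scal; apply Derive_const.
Qed.

Lemma meridian_fE u v :
  fE Z u v = Derive f u ^ 2 * dot3 (l v) (l v) + Derive g u ^ 2.
Proof. unfold fE, dot4, dot3; rewrite !meridian_z_u; ring. Qed.

Lemma meridian_fF u v : fF Z u v = f u * Derive f u * dot3 (l v) (tan_sph l v).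
Proof. unfold fF, dot4, dot3; rewrite !meridian_z_u, !meridian_z_v; ring. Qed.

Lemma meridian_fG u v : fG Z u v = f u ^ 2 * dot3 (tan_sph l v) (tan_sph l v).
Proof. unfold fG, dot4, dot3; rewrite !meridian_z_v; ring. Qed.

Lemma meridian_z_uu_z_u u v :
  dot4 (z_uu Z u v) (z_u Z u v) =
  Derive f u * Derive (Derive f) u * dot3 (l v) (l v) + Derive g u * Derive (Derive g) u.
Proof. unfold dot4, dot3; rewrite !meridian_z_uu, !meridian_z_u; ring. Qed.

Lemma meridian_z_uu_z_v u v :
  dot4 (z_uu Z u v) (z_v Z u v) = f u * Derive (Derive f) u * dot3 (l v) (tan_sph l v).
Proof. unfold dot4, dot3; rewrite !meridian_z_uu, !meridian_z_v; ring. Qed.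

Lemma meridian_z_vv_z_u u v :
  dot4 (z_vv Z u v) (z_u Z u v) = f u * Derive f u * dot3 (dvec (tan_sph l) v) (l v).
Proof. unfold dot4, dot3; rewrite !meridian_z_vv, !meridian_z_u; ring. Qed.

Lemma meridian_z_vv_z_v u v :
  dot4 (z_vv Z u v) (z_v Z u v) = f u ^ 2 * dot3 (dvec (tan_sph l) v) (tan_sph l v).
Proof. unfold dot4, dot3; rewrite !meridian_z_vv, !meridian_z_v; ring. Qed.

End MeridianDerivatives.

Section MeridianAtPoint.
Variables (f g : R -> R) (l : R -> nat -> R) (K u v : R).
Hypotheses
  (Hf : f u <> 0)
  (Hunit : Derive f u ^ 2 + Derive g u ^ 2 = 1)
  (Hunit' : Derive f u * Derive (Derive f) u + Derive g u * Derive (Derive g) u = 0)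
  (Hl : dot3 (l v) (l v) = 1)
  (Ht : dot3 (tan_sph l v) (tan_sph l v) = 1)
  (Hlt : dot3 (l v) (tan_sph l v) = 0)
  (Hfrenet : forall i, (i < 3)%nat -> dvec (tan_sph l) v i = K * nor_sph l v i - l v i).

Lemma meridian_first_fundamental_form :
  fE (meridian f g l) u v = 1 /\ fF (meridian f g l) u v = 0 /\
  fG (meridian f g l) u v = f u ^ 2.
Proof.
rewrite meridian_fE, meridian_fF, meridian_fG, Hl, Ht, Hlt.
repeat split; lra.
Qed.

Lemma meridian_second_derivative_dots :
  dot4 (z_uu (meridian f g l) u v) (z_u (meridian f g l) u v) = 0 /\
  dot4 (z_uu (meridian f g l) u v) (z_v (meridian f g l) u v) = 0 /\
  dot4 (z_vv (meridian f g l) u v) (z_u (meridian f g l) u v) = - (f u * Derive f u) /\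
  dot4 (z_vv (meridian f g l) u v) (z_v (meridian f g l) u v) = 0.
Proof.
rewrite meridian_z_uu_z_u, meridian_z_uu_z_v, meridian_z_vv_z_u, meridian_z_vv_z_v.
rewrite !(dot3_dvec_tan_sph l K v Hfrenet), dot3_nor_sph_l, dot3_nor_sph_tan_sph, Hl, Hlt.
repeat split; lra.
Qed.

Lemma mean_curv_meridian (i : nat) :
  mean_curv (meridian f g l) u v i =
  (z_uu (meridian f g l) u v i
   + (z_vv (meridian f g l) u v i + f u * Derive f u * z_u (meridian f g l) u v i) / f u ^ 2) / 2.
Proof.
destruct meridian_first_fundamental_form as (HE & HF & HG).
destruct meridian_second_derivative_dots as (Huu_u & Huu_v & Hvv_u & Hvv_v).
assert (Hf2 : f u ^ 2 <> 0) by (apply pow_nonzero; exact Hf).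
rewrite mean_curv_orthogonal by (rewrite ?HE, ?HG; lra || exact Hf2 || exact HF).
unfold sig_uu, sig_vv.
rewrite !normal_part_orthogonal by (rewrite ?HE, ?HG; lra || exact Hf2 || exact HF).
rewrite Huu_u, Huu_v, Hvv_u, Hvv_v, HE, HG.
field; exact Hf.
Qed.

Lemma mean_curv_meridian_sph (i : nat) : (i < 3)%nat ->
  mean_curv (meridian f g l) u v i =
  K / (2 * f u) * nor_sph l v i
  + (f u * kappa_m f g u + Derive g u) / (2 * f u) * (- Derive g u * l v i).
Proof.
intro Hi.
replace ((f u * kappa_m f g u + Derive g u) / (2 * f u) * (- Derive g u * l v i))
  with (- (Derive g u * (f u * kappa_m f g u + Derive g u)) / (2 * f u) * l v i)
  by (field; exact Hf).
rewrite kappa_m_tangent_g, mean_curv_meridian by assumption.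
destruct i as [|[|[|i]]]; [| | | lia];
  rewrite meridian_z_uu, meridian_z_vv, meridian_z_u, Hfrenet by lia;
  field; exact Hf.
Qed.

Lemma mean_curv_meridian_e4 :
  mean_curv (meridian f g l) u v 3%nat =
  (f u * kappa_m f g u + Derive g u) / (2 * f u) * Derive f u.
Proof.
replace ((f u * kappa_m f g u + Derive g u) / (2 * f u) * Derive f u)
  with (Derive f u * (f u * kappa_m f g u + Derive g u) / (2 * f u))
  by (field; exact Hf).
rewrite kappa_m_tangent_f, mean_curv_meridian, meridian_z_uu, meridian_z_vv, meridian_z_u
  by assumption.
field; exact Hf.
Qed.

Lemma mean_curv_meridian_sqnorm :
  dot4 (mean_curv (meridian f g l) u v) (mean_curv (meridian f g l) u v) =
  (K ^ 2 + (f u * kappa_m f g u + Derive g u) ^ 2) / (4 * f u ^ 2).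
Proof.
rewrite (dot4_orthonormal_combination (nor_sph l v) (l v) _
  (K / (2 * f u)) (- ((f u * kappa_m f g u + Derive g u) / (2 * f u) * Derive g u))
  ((f u * kappa_m f g u + Derive g u) / (2 * f u) * Derive f u)).
- transitivity ((K ^ 2 + (f u * kappa_m f g u + Derive g u) ^ 2
                  * (Derive f u ^ 2 + Derive g u ^ 2)) / (4 * f u ^ 2));
    [field; exact Hf | rewrite Hunit, Rmult_1_r; reflexivity].
- exact (nor_sph_unit l v Hl Ht Hlt).
- exact Hl.
- apply dot3_nor_sph_l.
- intros i Hi; rewrite mean_curv_meridian_sph by exact Hi; ring.
- exact mean_curv_meridian_e4.
Qed.

Lemma norm_H_meridian_eq_iff (a : R) : 0 < a ->
  norm_H (meridian f g l) u v = a <->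
  K ^ 2 + (f u * kappa_m f g u + Derive g u) ^ 2 = 4 * a ^ 2 * f u ^ 2.
Proof.
intro Ha.
assert (Hf2 : 0 < f u ^ 2) by (apply pow2_gt_0; exact Hf).
assert (Hsq : 0 <= (K ^ 2 + (f u * kappa_m f g u + Derive g u) ^ 2) / (4 * f u ^ 2)).
{ apply Rdiv_le_0_compat; [|lra].
  apply Rplus_le_le_0_compat; apply pow2_ge_0. }
unfold norm_H; rewrite mean_curv_meridian_sqnorm.
split; intro H.
- apply sqrt_lem_0 in H; [|exact Hsq|lra].
  transitivity ((K ^ 2 + (f u * kappa_m f g u + Derive g u) ^ 2) / (4 * f u ^ 2) * (4 * f u ^ 2));
    [field; exact Hf | rewrite <- H; ring].
- apply sqrt_lem_1; [exact Hsq | lra |].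
  rewrite H; field; exact Hf.
Qed.

End MeridianAtPoint.

Lemma coef_sq_of_profile_ode_on (ia ib : Rbar) (f g : R -> R) (a b : R) :
  smooth_on (Ioo ia ib) f -> smooth_on (Ioo ia ib) g ->
  (forall u, Ioo ia ib u -> Derive f u ^ 2 + Derive g u ^ 2 = 1) ->
  (forall u, Ioo ia ib u -> kappa_m f g u <> 0) ->
  (forall u, Ioo ia ib u ->
     (1 - Derive f u ^ 2 - f u * Derive (Derive f) u) ^ 2
     = (1 - Derive f u ^ 2) * (4 * a ^ 2 * f u ^ 2 - b ^ 2)) ->
  forall u, Ioo ia ib u ->
  (f u * kappa_m f g u + Derive g u) ^ 2 = 4 * a ^ 2 * f u ^ 2 - b ^ 2.
Proof.
intros Hf Hg Hunit Hkm Hode u Hu.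
pose proof (unit_speed_acceleration_orthogonal ia ib f g Hf Hg Hunit) as Hacc.
set (h s := (f s * kappa_m f g s + Derive g s) ^ 2 - (4 * a ^ 2 * f s ^ 2 - b ^ 2)).
assert (Hoff : forall s, Ioo ia ib s -> Derive g s <> 0 -> h s = 0).
{ intros s Hs Hg0; unfold h.
  rewrite (coef_sq_of_profile_ode f g s (4 * a ^ 2 * f s ^ 2 - b ^ 2)); auto; ring. }
destruct (Req_dec (h u) 0) as [H0|Hne]; [unfold h in H0; lra | exfalso].
assert (Hcont : continuity_pt h u).
{ apply continuity_pt_of_ex_derive; unfold h, kappa_m; auto_derive.
  repeat split; first [exact (Hf 0%nat u Hu) | exact (Hf 1%nat u Hu) | exact (Hf 2%nat u Hu)
                      | exact (Hg 1%nat u Hu) | exact (Hg 2%nat u Hu)]. }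
assert (Hg1 : Derive g u = 0).
{ destruct (Req_dec (Derive g u) 0) as [H0|H0]; [exact H0|].
  exfalso; exact (Hne (Hoff u Hu H0)). }
assert (Hg2 : Derive (Derive g) u = 0).
{ apply (Derive_eq0_of_locally_neq0 h _ u Hcont); [|exact Hne].
  apply (filter_imp (Ioo ia ib)); [exact Hoff | exact (Ioo_open _ _ _ Hu)]. }
apply (Hkm u Hu); unfold kappa_m; rewrite Hg1, Hg2; ring.
Qed.

Theorem proposition5p2
  (ia ib ja jb : Rbar) (f g : R -> R) (l : R -> nat -> R) (kappa : R -> R) (a : R) :
  Rbar_lt ia ib -> Rbar_lt ja jb ->
  smooth_on (Ioo ia ib) f -> smooth_on (Ioo ia ib) g ->
  (forall u, Ioo ia ib u -> Derive f u ^ 2 + Derive g u ^ 2 = 1) ->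
  (forall u, Ioo ia ib u -> f u <> 0) ->
  (forall i, (i < 3)%nat -> smooth_on (Ioo ja jb) (fun v => l v i)) ->
  (forall v, Ioo ja jb v -> dot3 (l v) (l v) = 1) ->
  (forall v, Ioo ja jb v -> dot3 (tan_sph l v) (tan_sph l v) = 1) ->
  (* kappa is the spherical curvature: t' = kappa n - l, n' = - kappa t *)
  (forall v, Ioo ja jb v -> forall i, (i < 3)%nat ->
      dvec (tan_sph l) v i = kappa v * nor_sph l v i - l v i) ->
  (forall v, Ioo ja jb v -> forall i, (i < 3)%nat ->
      dvec (nor_sph l) v i = - kappa v * tan_sph l v i) ->
  (* general class *)
  (forall u v, Ioo ia ib u -> Ioo ja jb v -> kappa_m f g u * kappa v <> 0) ->
  0 < a ->
  ((forall u v, Ioo ia ib u -> Ioo ja jb v -> norm_H (meridian f g l) u v = a) <->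
   exists b : R, b <> 0 /\
     (forall v, Ioo ja jb v -> kappa v = b) /\
     (forall u, Ioo ia ib u ->
        (1 - Derive f u ^ 2 - f u * Derive (Derive f) u) ^ 2
        = (1 - Derive f u ^ 2) * (4 * a ^ 2 * f u ^ 2 - b ^ 2))).
Proof.
intros Hab Hjab Hsf Hsg Hunit Hf0 Hsl Hl Ht Hfrenet _ Hgen Ha.
destruct (Ioo_inhabited _ _ Hab) as [u0 Hu0]; destruct (Ioo_inhabited _ _ Hjab) as [v0 Hv0].
pose proof (unit_speed_acceleration_orthogonal _ _ _ _ Hsf Hsg Hunit) as Hacc.
pose proof (dot3_l_tan_sph_eq0 _ _ _ Hsl Hl) as Hlt.
assert (HH : forall u v, Ioo ia ib u -> Ioo ja jb v ->
  norm_H (meridian f g l) u v = a <->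
  kappa v ^ 2 + (f u * kappa_m f g u + Derive g u) ^ 2 = 4 * a ^ 2 * f u ^ 2)
  by (intros u v Hu Hv; apply norm_H_meridian_eq_iff; auto).
split.
- intro HN.
  assert (Hsum := fun u v Hu Hv => proj1 (HH u v Hu Hv) (HN u v Hu Hv)).
  exists (kappa v0); split; [|split].
  + intro Hk; apply (Hgen u0 v0 Hu0 Hv0); rewrite Hk; ring.
  + apply (Ioo_constant_of_sq_constant _ _ kappa
      (4 * a ^ 2 * f u0 ^ 2 - (f u0 * kappa_m f g u0 + Derive g u0) ^ 2)); auto.
    * exact (spherical_curvature_continuous _ _ _ _ Hsl Hl Ht Hfrenet).
    * intros v Hv Hk; apply (Hgen u0 v Hu0 Hv); rewrite Hk; ring.
    * intros v Hv; specialize (Hsum u0 v Hu0 Hv); lra.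
  + intros u Hu; apply (profile_ode_of_coef_sq f g); auto.
    specialize (Hsum u v0 Hu Hv0); lra.
- intros (b & _ & Hkb & Hode) u v Hu Hv.
  apply HH; auto.
  rewrite Hkb, (coef_sq_of_profile_ode_on ia ib f g a b); auto; [ring|].
  intros u' Hu' Hk; apply (Hgen u' v0 Hu' Hv0); rewrite Hk; ring.
Qed.
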